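(* Let $P, Q \subseteq \mathbb{R}^d$ be semi-rational polytopes, each of codimension $0$ or $1$. Suppose that $L_{P+w}(s) = L_{Q+w}(s)$ for all integer vectors $w \in \mathbb{Z}^d$ and all real $s > 0$. Then $P = Q$.
   Context: For a polytope $P \subseteq \mathbb{R}^d$ and real $s \ge 0$, the real Ehrhart function is $L_P(s) = \#(sP \cap \mathbb{Z}^d)$, where $sP = \{sx : x \in P\}$. A polytope $P \subseteq \mathbb{R}^d$ is semi-rational if it can be written as $P = \bigcap_{i=1}^n \{x \in \mathbb{R}^d : \langle a_i, x\rangle \le b_i\}$ with all $a_i \in \mathbb{Z}^d$ and all $b_i \in \mathbb{R}$ arbitrary. *)

From Stdlib Require Import Reals ZArith List.
From mathcomp Require Import ssreflect ssrbool ssrfun eqtype ssrnat seq fintype bigop.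

Set Implicit Arguments.
Unset Strict Implicit.

Open Scope R_scope.

Definition pt (d : nat) := 'I_d -> R.

Definition zdot (d : nat) (a : 'I_d -> Z) (x : pt d) : R :=
  \big[Rplus/0]_(i < d) (IZR (a i) * x i).

Definition bounded (d : nat) (P : pt d -> Prop) : Prop :=
  exists M : R, forall x, P x -> forall i, Rabs (x i) <= M.

Definition semi_rational_polytope (d : nat) (P : pt d -> Prop) : Prop :=
  (exists H : list (('I_d -> Z) * R),
      forall x, P x <-> Forall (fun h => zdot h.1 x <= h.2) H)
  /\ bounded P.

Definition aff_indep (d k : nat) (p : 'I_k -> pt d) : Prop :=
  forall lam : 'I_k -> R,
    \big[Rplus/0]_(i < k) lam i = 0 ->
    (forall j : 'I_d, \big[Rplus/0]_(i < k) (lam i * p i j) = 0) ->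
    forall i, lam i = 0.

(* codim P = d - dim(aff P) is 0 or 1, i.e. dim(aff P) >= d - 1, i.e.
   P contains d affinely independent points (with dim(empty) = -1). *)
Definition codim_le1 (d : nat) (P : pt d -> Prop) : Prop :=
  exists p : 'I_d -> pt d, (forall i, P (p i)) /\ aff_indep p.

Definition translate (d : nat) (P : pt d -> Prop) (w : 'I_d -> Z) : pt d -> Prop :=
  fun x => P (fun i => x i - IZR (w i)).

Definition in_dilate (d : nat) (P : pt d -> Prop) (s : R) (z : list Z) : Prop :=
  length z = d /\
  exists x : pt d, P x /\ forall i : 'I_d, IZR (List.nth (nat_of_ord i) z 0%Z) = s * x i.

(* ehrhart P s n  :<->  L_P(s) = #(sP ∩ Z^d) = n. *)
Definition ehrhart (d : nat) (P : pt d -> Prop) (s : R) (n : nat) : Prop :=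
  exists l : list (list Z),
    NoDup l /\ length l = n /\ forall z, List.In z l <-> in_dilate P s z.

(* If x lies in P but not in Q, choose y in P near x, outside Q, of the form
   y = r z - w with z, w integer vectors and r larger than the coordinate
   bounds of P and Q together.  Then z is an integer point of (1/r)(P + w),
   whereas (1/r)(Q + w) has none: an integer point z' would put r z' - w in Q
   at distance < r from y, forcing z' = z and y in Q.  Hence
   L_{P+w}(1/r) > 0 = L_{Q+w}(1/r).

   Such points y exist because points r z - w are dense in P, which is where
   codimension at most 1 enters: near a suitable point u of P all constraints
   tight at u have normals proportional to a single integer vector a (the
   affine hull of P is a hyperplane or R^d), so P coincides near u with the
   hyperplane <a, y> = <a, u>; and rounding N (u - w0) to an integer vector and
   rescaling it lands exactly on that hyperplane, within any prescribed
   distance of u. *)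

From Stdlib Require Import Reals ZArith List Lra Lia Classical FunctionalExtensionality.
From mathcomp Require Import ssreflect ssrbool ssrfun eqtype ssrnat seq fintype bigop.
From mathcomp Require Import ssralg ssrnum matrix mxalgebra.
From mathcomp Require Import Rstruct.

Set Implicit Arguments.
Unset Strict Implicit.

Open Scope R_scope.

Section HyperplaneNormals.
Import GRing.Theory Num.Theory.
Local Open Scope ring_scope.

Variables (d : nat) (p : 'I_d -> 'I_d -> R) (j0 : 'I_d).
Hypothesis p_indep : aff_indep p.

Lemma aff_indep_edges_free (v : 'I_d -> R) :
  (forall i, \sum_j v j * (p j i - p j0 i) = 0) -> forall j, j != j0 -> v j = 0.
Proof.
move=> hv j nj.
have indep : forall lam : 'I_d -> R, \sum_k lam k = 0 ->
    (forall i, \sum_k lam k * p k i = 0) -> forall k, lam k = 0 := p_indep.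
have sum_delta (F : 'I_d -> R) : \sum_k (k == j0)%:R * F k = F j0.
  rewrite (bigD1 j0) //= eqxx mul1r big1 ?addr0 // => k /negbTE ->.
  by rewrite mul0r.
pose lam k := v k - (k == j0)%:R * \sum_l v l.
have := indep lam _ _ j; rewrite /lam (negbTE nj) mul0r subr0; apply.
  by rewrite /lam sumrB (sum_delta (fun=> \sum_l v l)) subrr.
move=> i; rewrite /lam; apply: etrans (hv i).
under eq_bigr do rewrite mulrBl -mulrA.
by rewrite sumrB sum_delta; under [in RHS]eq_bigr do rewrite mulrBr; rewrite sumrB -mulr_suml.
Qed.

Variable a : 'I_d -> R.
Hypothesis a_normal : forall j, \sum_i a i * p j i = \sum_i a i * p j0 i.
Hypothesis a_neq0 : exists i, a i != 0.

Let a_orth j : \sum_i a i * (p j i - p j0 i) = 0.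
Proof. by under eq_bigr do rewrite mulrBr; rewrite sumrB a_normal subrr. Qed.

Let a2_gt0 : 0 < \sum_i a i * a i.
Proof.
have [i1 ai1] := a_neq0.
rewrite (bigD1 i1) //= ltr_pwDl //; first by rewrite lt0r mulf_neq0 //= -expr2 sqr_ge0.
by apply: sumr_ge0 => i _; rewrite -expr2 sqr_ge0.
Qed.

Let normal_mx : 'M[R]_d := \matrix_(j, i) (if j == j0 then a i else p j i - p j0 i).

(* The edges [p j - p j0] are independent and the nonzero vector [a] is
   orthogonal to all of them. *)
Lemma normal_mx_row_free : row_free normal_mx.
Proof.
apply: inj_row_free => v /matrixP vN0.
have col0 i : \sum_j v ord0 j * normal_mx j i = 0 by have := vN0 ord0 i; rewrite !mxE.
have v_j0 : v ord0 j0 = 0.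
  have : \sum_i a i * (\sum_j v ord0 j * normal_mx j i) = v ord0 j0 * \sum_i a i * a i.
    under eq_bigr do rewrite mulr_sumr.
    rewrite exchange_big /= (bigD1 j0) //= [X in _ + X]big1 ?addr0 => [|j nj].
      by rewrite mulr_sumr; apply: eq_bigr => i _; rewrite mxE eqxx mulrCA.
    under eq_bigr do rewrite mxE (negbTE nj) mulrCA.
    by rewrite -mulr_sumr a_orth mulr0.
  under eq_bigr do rewrite col0 mulr0; rewrite big1 // => /esym/eqP.
  by rewrite mulf_eq0 (negbTE (lt0r_neq0 a2_gt0)) orbF => /eqP.
apply/matrixP => i j; rewrite mxE ord1.
have [->|nj] := eqVneq j j0; first exact: v_j0.
apply: (aff_indep_edges_free (v := v ord0)) nj => k.
rewrite -[RHS](col0 k) (bigD1 j0) //= v_j0 mul0r add0r.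
rewrite [in RHS](bigD1 j0) //= v_j0 mul0r add0r.
by apply: eq_bigr => l nl; rewrite mxE (negbTE nl).
Qed.

Lemma hyperplane_normals_proportional (b : 'I_d -> R) :
  (forall j, \sum_i b i * p j i = \sum_i b i * p j0 i) ->
  exists mu, forall i, b i = mu * a i.
Proof.
move=> b_normal.
have b_orth j : \sum_i b i * (p j i - p j0 i) = 0.
  by under eq_bigr do rewrite mulrBr; rewrite sumrB b_normal subrr.
pose mu := (\sum_i a i * b i) / \sum_i a i * a i.
pose c : 'cV[R]_d := \col_i (b i - mu * a i).
have Nc : normal_mx *m c = 0.
  apply/matrixP => j k; rewrite !mxE.
  under eq_bigr do rewrite !mxE mulrBr.
  rewrite sumrB; have [jj0|nj] := eqVneq j j0; first subst j.
    under [X in _ - X]eq_bigr do rewrite mulrCA.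
    by rewrite -mulr_sumr /mu divfK ?subrr ?(lt0r_neq0 a2_gt0).
  under eq_bigr do rewrite mulrC; under [X in _ - X]eq_bigr do rewrite mulrCA [_ * a _]mulrC.
  by rewrite -mulr_sumr b_orth a_orth mulr0 subrr.
have N_unit : normal_mx \in unitmx by rewrite -row_free_unit normal_mx_row_free.
have c0 : c = 0 by rewrite -(mulKmx N_unit c) Nc mulmx0.
exists mu => i; apply/eqP; rewrite -subr_eq0.
by have := congr1 (fun M : 'cV[R]_d => M i ord0) c0; rewrite !mxE => ->.
Qed.

End HyperplaneNormals.

Section Sums.
Import Num.Theory.

Lemma sumR_le n (F G : 'I_n -> R) :
  (forall i, F i <= G i) -> \big[Rplus/0]_(i < n) F i <= \big[Rplus/0]_(i < n) G i.
Proof. by move=> FG; apply/RleP/ler_sum => i _; apply/RleP. Qed.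

Lemma sumR_distr_l n (k : R) (F : 'I_n -> R) :
  k * \big[Rplus/0]_(i < n) F i = \big[Rplus/0]_(i < n) (k * F i).
Proof. exact: GRing.mulr_sumr. Qed.

Lemma sumR_const n (b : R) : \big[Rplus/0]_(i < n) b = INR n * b.
Proof. by rewrite GRing.sumr_const card_ord -GRing.mulr_natl INRE. Qed.

Lemma Rabs_sumR_le n (F : 'I_n -> R) :
  Rabs (\big[Rplus/0]_(i < n) F i) <= \big[Rplus/0]_(i < n) Rabs (F i).
Proof. exact/RleP/(@ler_norm_sum R R). Qed.

Lemma sumR_ge0 n (F : 'I_n -> R) : (forall i, 0 <= F i) -> 0 <= \big[Rplus/0]_(i < n) F i.
Proof. by move=> F_ge0; apply/RleP/sumr_ge0 => i _; apply/RleP. Qed.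

Lemma sumR_sub n (F G : 'I_n -> R) :
  \big[Rplus/0]_(i < n) (F i - G i) = \big[Rplus/0]_(i < n) F i - \big[Rplus/0]_(i < n) G i.
Proof. exact: GRing.sumrB. Qed.

Lemma le_sumR n (F : 'I_n -> R) j :
  (forall i, 0 <= F i) -> F j <= \big[Rplus/0]_(i < n) F i.
Proof.
move=> F_ge0; rewrite (bigD1 j) //=; apply/RleP; rewrite lerDl.
by apply: sumr_ge0 => i _; apply/RleP.
Qed.

Lemma sumR_eq0_ge0 n (F : 'I_n -> R) :
  (forall i, 0 <= F i) -> \big[Rplus/0]_(i < n) F i = 0 -> forall i, F i = 0.
Proof. by move=> F_ge0 F0 i; apply: (psumr_eq0P (P := xpredT)) => // k _; apply/RleP. Qed.

End Sums.

Definition close d (e : R) (x y : pt d) : Prop := forall i, Rabs (y i - x i) < e.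

Definition znorm1 d (a : 'I_d -> Z) : R := \big[Rplus/0]_(i < d) Rabs (IZR (a i)).

Section Zdot.
Variable d : nat.
Implicit Types (a c : 'I_d -> Z) (x y : pt d).

Lemma znorm1_ge0 a : 0 <= znorm1 a.
Proof. by apply: sumR_ge0 => i; apply: Rabs_pos. Qed.

Lemma zdot_ext a x y : (forall i, x i = y i) -> zdot a x = zdot a y.
Proof. by move=> xy; apply: eq_bigr => i _; rewrite xy. Qed.

Lemma zdot_zero a x : (forall i, a i = 0%Z) -> zdot a x = 0.
Proof. by move=> a0; apply: big1 => i _; rewrite a0; ring. Qed.

Lemma zdot_add a x y : zdot a (fun i => x i + y i) = zdot a x + zdot a y.
Proof. by rewrite /zdot -big_split /=; apply: eq_bigr => i _; ring. Qed.

Lemma zdot_scale a (k : R) x : zdot a (fun i => k * x i) = k * zdot a x.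
Proof. by rewrite /zdot sumR_distr_l; apply: eq_bigr => i _; ring. Qed.

Lemma zdot_comb a (al be : R) x y :
  zdot a (fun i => al * x i + be * y i) = al * zdot a x + be * zdot a y.
Proof. by rewrite zdot_add !zdot_scale. Qed.

Lemma zdot_proportional a c (mu : R) x :
  (forall i, IZR (c i) = mu * IZR (a i)) -> zdot c x = mu * zdot a x.
Proof.
by move=> ca; rewrite /zdot sumR_distr_l; apply: eq_bigr => i _; rewrite ca Rmult_assoc.
Qed.

Lemma zdot_sub a x y : zdot a y - zdot a x = zdot a (fun i => y i - x i).
Proof.
rewrite (zdot_ext a (x := fun i => y i - x i) (y := fun i => 1 * y i + -1 * x i)).
  by rewrite zdot_comb; ring.
by move=> i; ring.
Qed.

Lemma zdot_bound a x (e : R) :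
  (forall i, Rabs (x i) <= e) -> Rabs (zdot a x) <= e * znorm1 a.
Proof.
move=> x_le; rewrite /znorm1 sumR_distr_l; apply: Rle_trans (Rabs_sumR_le _) (sumR_le _) => i.
by rewrite Rabs_mult Rmult_comm; apply: Rmult_le_compat_r; [exact: Rabs_pos | exact: x_le].
Qed.

Lemma zdot_continuous a x (r : R) : 0 < r ->
  exists e, 0 < e /\ forall y, close e x y -> Rabs (zdot a y - zdot a x) < r.
Proof.
move=> r_gt0; have A0 := znorm1_ge0 a.
exists (r / (znorm1 a + 1)); split=> [|y xy]; first by apply: Rdiv_lt_0_compat; lra.
rewrite zdot_sub; apply: Rle_lt_trans (zdot_bound (e := r / (znorm1 a + 1)) _ _) _ => [i|].
  exact: Rlt_le (xy i).
have := Rdiv_lt_0_compat r (znorm1 a + 1) r_gt0 ltac:(lra).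
have -> : r / (znorm1 a + 1) * znorm1 a = r - r / (znorm1 a + 1) by field; lra.
lra.
Qed.

End Zdot.

Lemma close_le d (e e' : R) (x y : pt d) : e <= e' -> close e x y -> close e' x y.
Proof. by move=> le_e xy i; have := xy i; lra. Qed.

Lemma close_trans d (e e' : R) (x y z : pt d) :
  close e x y -> close e' y z -> close (e + e') x z.
Proof.
move=> xy yz i; have := Rabs_triang (y i - x i) (z i - y i).
by rewrite (_ : y i - x i + (z i - y i) = z i - x i); [have := xy i; have := yz i; lra | ring].
Qed.

Lemma pt_bounded d (v : pt d) : exists V, 0 <= V /\ forall i, Rabs (v i) <= V.
Proof.
exists (\big[Rplus/0]_(i < d) Rabs (v i)); split => [|i].
  by apply: sumR_ge0 => i; apply: Rabs_pos.
by apply: le_sumR => j; apply: Rabs_pos.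
Qed.

Lemma up_near (r : R) : Rabs (IZR (up r) - r) <= 1.
Proof. by have [h1 h2] := archimed r; apply: Rabs_le; lra. Qed.

(* Such a [y] gives the integer point [z] of the dilate [(1/r)(X + w)] of any
   [X] containing [y]. *)
Definition scaled_lattice_point d (R0 : R) (y : pt d) : Prop :=
  exists (r : R) (z w : 'I_d -> Z), R0 < r /\ forall i, y i = r * IZR (z i) - IZR (w i).

(* Trading [K z] between the two terms enlarges the mesh by the integer [K]. *)
Lemma scaled_lattice_point_intro d (R0 tau : R) (z w : 'I_d -> Z) :
  scaled_lattice_point R0 (fun i => tau * IZR (z i) + IZR (w i)).
Proof.
pose K := up (R0 - tau); have [K_gt _] := archimed (R0 - tau).
exists (tau + IZR K), z, (fun i => K * z i - w i)%Z; split => [|i]; first by rewrite /K; lra.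
by rewrite minus_IZR mult_IZR; ring.
Qed.

Lemma scaled_lattice_approx d (v : pt d) (eta : R) : 0 < eta ->
  exists (tau : R) (z : 'I_d -> Z), close eta v (fun i => tau * IZR (z i)).
Proof.
move=> eta_gt0; pose N := / eta + 1.
have inv_eta_gt0 := Rinv_0_lt_compat _ eta_gt0.
have N_gt0 : 0 < N by rewrite /N; lra.
have invN_lt : / N < eta.
  rewrite -[eta]Rinv_inv; apply: Rinv_lt_contravar; [nra | rewrite /N; lra].
exists (/ N), (fun i => up (N * v i)) => i.
have -> : / N * IZR (up (N * v i)) - v i = / N * (IZR (up (N * v i)) - N * v i).
  by field; lra.
rewrite Rabs_mult Rabs_inv (Rabs_pos_eq N); last lra.
apply: (Rle_lt_trans _ (/ N * 1)); last lra.
by apply: Rmult_le_compat_l; [exact: Rlt_le (Rinv_0_lt_compat _ N_gt0) | exact: up_near].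
Qed.

(* Round [N v] to an integer point [z] and rescale it so as to land exactly on
   the hyperplane through [v]: the rescaling factor is [~ 1/N]. *)
Lemma scaled_lattice_approx_hyperplane d (a : 'I_d -> Z) (v : pt d) (eta : R) :
  0 < eta -> zdot a v <> 0 ->
  exists (tau : R) (z : 'I_d -> Z),
    close eta v (fun i => tau * IZR (z i)) /\ zdot a (fun i => tau * IZR (z i)) = zdot a v.
Proof.
move=> eta_gt0 av; set s := zdot a v; set A := znorm1 a.
have A_ge0 : 0 <= A := znorm1_ge0 a.
have abs_s_gt0 : 0 < Rabs s by apply: Rabs_pos_lt.
have [V [V_ge0 v_le]] := pt_bounded v.
pose K := (Rabs s + A * V) / eta.
have K_gt0 : 0 < K by apply: Rdiv_lt_0_compat; nra.
pose N := (K + A + 1) / Rabs s.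
have Ns : N * Rabs s = K + A + 1 by rewrite /N; field; lra.
have N_gt0 : 0 < N by apply: Rdiv_lt_0_compat; lra.
pose z i := up (N * v i); pose e i := IZR (z i) - N * v i.
have e_le i : Rabs (e i) <= 1 := up_near (N * v i).
set Sz := zdot a (fun i => IZR (z i)); set Se := zdot a e.
have Sz_eq : Sz = N * s + Se.
  by rewrite /Sz -zdot_scale -zdot_add; apply: zdot_ext => i; rewrite /e; ring.
have Se_le : Rabs Se <= A by have := zdot_bound a e_le; rewrite -/A -/Se; lra.
have Sz_big : K + 1 <= Rabs Sz.
  have := Rabs_triang_inv (N * s) (- Se); rewrite Rabs_Ropp Rabs_mult (Rabs_pos_eq N); last lra.
  by rewrite Sz_eq; rewrite (_ : N * s - - Se = N * s + Se); [lra | ring].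
have Sz0 : Sz <> 0 by move=> Sz0; rewrite Sz0 Rabs_R0 in Sz_big; lra.
exists (s / Sz), z; split => [i|]; last by rewrite zdot_scale -/Sz; field.
have -> : s / Sz * IZR (z i) - v i = (s * e i - Se * v i) / Sz.
  by rewrite /e Sz_eq; field; rewrite -Sz_eq.
have num_le : Rabs (s * e i - Se * v i) <= Rabs s + A * V.
  apply: Rle_trans (Rabs_triang _ _) _; rewrite Rabs_Ropp !Rabs_mult.
  have := e_le i; have := v_le i; have := Rabs_pos (e i); have := Rabs_pos (v i).
  have := Rabs_pos Se; nra.
have K_eta : Rabs s + A * V = K * eta by rewrite /K; field; lra.
rewrite /Rdiv Rabs_mult Rabs_inv.
apply: (Rmult_lt_reg_r (Rabs Sz)); first lra.
rewrite Rmult_assoc Rinv_l; last lra.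
nra.
Qed.

Lemma exists_shift_off_hyperplane d (a : 'I_d -> Z) (u : pt d) :
  (exists i, a i <> 0%Z) -> exists w : 'I_d -> Z, zdot a (fun i => u i - IZR (w i)) <> 0.
Proof.
move=> [i0 ai0]; case: (Req_dec (zdot a u) 0) => au; last first.
  by exists (fun=> 0%Z); rewrite (zdot_ext _ (y := u)) // => i; ring.
exists (fun i => if i == i0 then 1%Z else 0%Z); rewrite -zdot_sub au.
rewrite /zdot (bigD1 i0) //= eqxx big1 => [|i /negbTE ->]; last by ring.
rewrite Rmult_1_r Rplus_0_r Rminus_0_l; apply: Ropp_neq_0_compat; exact: not_0_IZR.
Qed.

Lemma scaled_lattice_approx_in_hyperplane d (a : 'I_d -> Z) (u : pt d) (eta R0 : R) :
  0 < eta -> exists y, scaled_lattice_point R0 y /\ close eta u y /\ zdot a y = zdot a u.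
Proof.
move=> eta_gt0.
have [w [tau [z [tz_close tz_dot]]]] : exists w tau z,
    close eta (fun i => u i - IZR (w i)) (fun i => tau * IZR (z i)) /\
    zdot a (fun i => tau * IZR (z i)) = zdot a (fun i => u i - IZR (w i)).
  case: (classic (exists i, a i <> 0%Z)) => [a_neq0 | a0].
    have [w aw] := exists_shift_off_hyperplane u a_neq0.
    by have := scaled_lattice_approx_hyperplane eta_gt0 aw; exists w.
  have a_eq0 i : a i = 0%Z by apply: NNPP => ai; apply: a0; exists i.
  have [tau [z tz_close]] := scaled_lattice_approx (fun i => u i - IZR 0) eta_gt0.
  by exists (fun=> 0%Z), tau, z; rewrite !zdot_zero.
exists (fun i => tau * IZR (z i) + IZR (w i)); split; first exact: scaled_lattice_point_intro.
split => [i|].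
  by rewrite (_ : _ - u i = tau * IZR (z i) - (u i - IZR (w i))); [exact: tz_close | ring].
rewrite zdot_add tz_dot -zdot_add; apply: zdot_ext => i; ring.
Qed.

Lemma list_common_threshold (T : Type) (l : list T) (Q : T -> R -> Prop) :
  (forall h e e', 0 < e' <= e -> Q h e -> Q h e') ->
  (forall h, In h l -> exists e, 0 < e /\ Q h e) ->
  exists e, 0 < e /\ forall h, In h l -> Q h e.
Proof.
move=> Q_mono; elim: l => [|h l IH] l_pos; first by exists 1; split => //; lra.
have [e1 [e1_gt0 Qe1]] := l_pos h (or_introl erefl).
have [e2 [e2_gt0 Qe2]] := IH (fun h' h'_in => l_pos h' (or_intror h'_in)).
have e_gt0 : 0 < Rmin e1 e2 by apply: Rmin_glb_lt.
exists (Rmin e1 e2); split => // h' [<-|h'_in].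
  by apply: (Q_mono _ e1) => //; split => //; apply: Rmin_l.
by apply: (Q_mono _ e2); [split => //; apply: Rmin_r | exact: Qe2].
Qed.

(* Near [u], the constraints slack at [u] stay satisfied, and those tight at [u]
   have normals parallel to [a], so they stay satisfied on the hyperplane
   [<a, y> = <a, u>]. *)
Lemma halfspaces_stable_near d (Hl : list (('I_d -> Z) * R)) (a : 'I_d -> Z) (u : pt d) :
  (forall h, In h Hl -> zdot h.1 u <= h.2) ->
  (forall h, In h Hl -> zdot h.1 u = h.2 ->
     exists mu, forall i, IZR (h.1 i) = mu * IZR (a i)) ->
  exists eta, 0 < eta /\ forall h, In h Hl ->
    forall y, close eta u y -> zdot a y = zdot a u -> zdot h.1 y <= h.2.
Proof.
move=> u_in tight_par.
apply: (list_common_threshold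
  (Q := fun h e => forall y, close e u y -> zdot a y = zdot a u -> zdot h.1 y <= h.2)).
  by move=> h e e' [_ le_e] Qe y uy; apply: Qe; apply: close_le uy.
move=> h h_in; case: (Rle_lt_or_eq_dec _ _ (u_in h h_in)) => [slack | tight].
  have [e [e_gt0 near]] := zdot_continuous h.1 u (r := h.2 - zdot h.1 u) ltac:(lra).
  exists e; split => // y uy _; have [lt _] := Rabs_def2 _ _ (near y uy); lra.
exists 1; split => [|y _ ay]; first lra.
have [mu h_par] := tight_par h h_in tight.
by rewrite (zdot_proportional _ h_par) ay -(zdot_proportional _ h_par) tight; lra.
Qed.

Definition barycenter d k (p : 'I_k -> pt d) : pt d :=
  fun i => / INR k * \big[Rplus/0]_(j < k) p j i.

Definition convex_comb d (lam : R) (x y : pt d) : pt d :=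
  fun i => (1 - lam) * x i + lam * y i.

Lemma zdot_barycenter d k (p : 'I_k -> pt d) (c : 'I_d -> Z) :
  zdot c (barycenter p) = / INR k * \big[Rplus/0]_(j < k) zdot c (p j).
Proof.
rewrite zdot_scale; congr (_ * _); rewrite /zdot exchange_big /=.
by apply: eq_bigr => i _; rewrite sumR_distr_l.
Qed.

Lemma barycenter_segment_halfspace d k (p : 'I_k -> pt d) (x : pt d) (c : 'I_d -> Z)
    (b lam : R) :
  (0 < k)%N -> 0 < lam < 1 -> zdot c x <= b -> (forall j, zdot c (p j) <= b) ->
  zdot c (convex_comb lam x (barycenter p)) <= b /\
  (zdot c (convex_comb lam x (barycenter p)) = b -> forall j, zdot c (p j) = b).
Proof.
move=> k_gt0 lam01 cx cp; set S := \big[Rplus/0]_(j < k) zdot c (p j).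
have k_pos : 0 < INR k by apply: lt_0_INR; apply/ltP.
have S_le : S <= INR k * b by rewrite -sumR_const; apply: sumR_le.
have avg_le : / INR k * S <= b.
  apply: (Rmult_le_reg_l (INR k)) => //; rewrite -Rmult_assoc Rinv_r; lra.
rewrite /convex_comb zdot_comb zdot_barycenter -/S; split; first nra.
move=> on_b; have avg_eq : / INR k * S = b by nra.
have gap : \big[Rplus/0]_(j < k) (b - zdot c (p j)) = 0.
  rewrite sumR_sub -/S sumR_const -avg_eq -Rmult_assoc Rinv_r; lra.
have gap_ge0 j : 0 <= b - zdot c (p j) by have := cp j; lra.
by move=> j; have := sumR_eq0_ge0 gap_ge0 gap j; lra.
Qed.

Lemma segment_start_close d (x y : pt d) (e : R) : 0 < e ->
  exists lam, 0 < lam < 1 /\ close e x (convex_comb lam x y).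
Proof.
move=> e_gt0; have [V [V_ge0 yx_le]] := pt_bounded (fun i => y i - x i).
pose D := 2 * (V + e); have D_gt0 : 0 < D by rewrite /D; lra.
have lamD : e / D * D = e by field; lra.
have lam_gt0 : 0 < e / D by apply: Rdiv_lt_0_compat.
exists (e / D); split.
  by split => //; apply: (Rmult_lt_reg_r D) => //; rewrite lamD /D; lra.
move=> i; rewrite /convex_comb (_ : _ - x i = e / D * (y i - x i)); last ring.
rewrite Rabs_mult (Rabs_pos_eq (e / D)); last lra.
apply: (Rle_lt_trans _ (e / D * V)); first by apply: Rmult_le_compat_l; [lra | exact: yx_le].
by rewrite -[X in _ < X]lamD; apply: Rmult_lt_compat_l => //; rewrite /D; lra.
Qed.

Lemma tight_normals_proportional d (p : 'I_d -> pt d) (S : ('I_d -> Z) -> Prop) :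
  aff_indep p -> (forall c, S c -> forall j j', zdot c (p j) = zdot c (p j')) ->
  exists a : 'I_d -> Z, forall c, S c -> exists mu, forall i, IZR (c i) = mu * IZR (a i).
Proof.
move=> p_indep S_flat.
case: (classic (exists c0 i0, S c0 /\ c0 i0 <> 0%Z)) => [[c0 [i0 [S_c0 c0_i0]]] | S0].
  exists c0 => c S_c.
  apply: (@hyperplane_normals_proportional d p i0 p_indep (fun i => IZR (c0 i))).
  - by move=> j; apply: S_flat.
  - by exists i0; apply/eqP => /eq_IZR.
  - by move=> j; apply: S_flat.
exists (fun=> 0%Z) => c S_c; exists 0 => i.
case: (Z.eq_dec (c i) 0) => [-> | ci]; first by rewrite Rmult_0_l.
by exfalso; apply: S0; exists c, i.
Qed.

Lemma scaled_lattice_points_dense d (P : pt d -> Prop) (Hl : list (('I_d -> Z) * R))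
    (p : 'I_d -> pt d) (x : pt d) (eps R0 : R) :
  (forall y, P y <-> Forall (fun h => zdot h.1 y <= h.2) Hl) ->
  (forall j, P (p j)) -> aff_indep p -> P x -> 0 < eps ->
  exists y, P y /\ close eps x y /\ scaled_lattice_point R0 y.
Proof.
move=> P_def Pp p_indep Px eps_gt0.
have in_P y : P y <-> forall h, In h Hl -> zdot h.1 y <= h.2.
  by rewrite P_def; apply: Forall_forall.
case: (posnP d) => [d0 | d_gt0].
  subst d; exists x; split => //; split => [[] //|].
  by exists (R0 + 1), (fun=> 0%Z), (fun=> 0%Z); split => [|[]] //; lra.
have [lam [lam01 xu]] := segment_start_close x (barycenter p) (e := eps / 2) ltac:(lra).
set u := convex_comb lam x (barycenter p) in xu.
have u_face h : In h Hl ->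
    zdot h.1 u <= h.2 /\ (zdot h.1 u = h.2 -> forall j, zdot h.1 (p j) = h.2).
  move=> h_in; apply: barycenter_segment_halfspace => //.
    exact: (proj1 (in_P x) Px h h_in).
  by move=> j; apply: (proj1 (in_P _) (Pp j) h h_in).
pose S c := exists b, In (c, b) Hl /\ zdot c u = b.
have S_flat c : S c -> forall j j', zdot c (p j) = zdot c (p j').
  by move=> [b [cb_in cu]] j j'; have /= tight := proj2 (u_face _ cb_in) cu; rewrite !tight.
have [a a_par] := tight_normals_proportional p_indep S_flat.
have tight_par h : In h Hl -> zdot h.1 u = h.2 ->
    exists mu, forall i, IZR (h.1 i) = mu * IZR (a i).
  by case: h => c b cb_in cu; apply: a_par; exists b.
have [eta [eta_gt0 stable]] :=
  halfspaces_stable_near (fun h h_in => proj1 (u_face h h_in)) tight_par.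
have min_gt0 : 0 < Rmin eta (eps / 2) by apply: Rmin_glb_lt; lra.
have [y [y_lat [uy ay]]] := scaled_lattice_approx_in_hyperplane a u R0 min_gt0.
exists y; split.
  by apply/in_P => h h_in; apply: stable => //; apply: close_le uy; apply: Rmin_l.
split => //; rewrite (_ : eps = eps / 2 + eps / 2); last field.
by apply: close_trans xu _; apply: close_le uy; apply: Rmin_r.
Qed.

Lemma List_nth_nth (T : Type) (l : list T) n x0 : List.nth n l x0 = nth x0 l n.
Proof. by elim: l n => [|a l IH] [|n] //=. Qed.

Lemma List_length_size (T : Type) (l : list T) : List.length l = size l.
Proof. by elim: l => //= a l ->. Qed.

Lemma IZR_eq0_of_abs_lt1 (m : Z) : Rabs (IZR m) < 1 -> m = 0%Z.
Proof.
move=> /Rabs_def2 [lt1 gtm1].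
have := lt_IZR _ _ lt1; have := lt_IZR (-1) _ gtm1; lia.
Qed.

Lemma ehrhart0P d (X : pt d -> Prop) (s : R) :
  ehrhart X s 0 <-> forall zl, ~ in_dilate X s zl.
Proof.
split => [[[|? ?] [_ [//= _ l_spec]]] zl /l_spec [] | no_pt].
by exists nil; split; [constructor | split => // zl; split => [[]|/no_pt]].
Qed.

Lemma in_dilate_translate d (X : pt d -> Prop) (w : 'I_d -> Z) (r : R) (zl : list Z) :
  0 < r ->
  in_dilate (translate X w) (/ r) zl <->
  length zl = d /\ X (fun i => r * IZR (List.nth i zl 0%Z) - IZR (w i)).
Proof.
move=> r_gt0; split => [[len [x [Xx x_zl]]] | [len Xzl]]; split => //.
  congr X: Xx; apply: functional_extensionality => i; rewrite x_zl; field; lra.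
by exists (fun i => r * IZR (List.nth i zl 0%Z)); split => // i; field; lra.
Qed.

Lemma scaled_lattice_point_counted d (P : pt d -> Prop) (r : R) (z w : 'I_d -> Z) (y : pt d) :
  0 < r -> (forall i, y i = r * IZR (z i) - IZR (w i)) -> P y ->
  in_dilate (translate P w) (/ r) [seq z i | i <- enum 'I_d].
Proof.
move=> r_gt0 y_eq Py; apply/in_dilate_translate => //.
split; first by rewrite List_length_size size_map size_enum_ord.
congr P: Py; apply: functional_extensionality => i.
by rewrite y_eq List_nth_nth (nth_map i) ?size_enum_ord // nth_ord_enum.
Qed.

(* A point of the coset [r Z^d - w] lying in [Q] is at distance [< r] from [y],
   hence equal to [y]. *)
Lemma scaled_lattice_point_isolated d (Q : pt d -> Prop) (MQ MP r : R) (z w : 'I_d -> Z)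
    (y : pt d) :
  (forall x, Q x -> forall i, Rabs (x i) <= MQ) -> (forall i, Rabs (y i) <= MP) ->
  0 < r -> MP + MQ < r -> (forall i, y i = r * IZR (z i) - IZR (w i)) -> ~ Q y ->
  ehrhart (translate Q w) (/ r) 0.
Proof.
move=> Q_bd y_bd r_gt0 r_big y_eq Qy; apply/ehrhart0P => zl /in_dilate_translate.
move=> /(_ r_gt0) [_ Qx]; apply: Qy; congr Q: (Qx); apply: functional_extensionality => i.
set m := (List.nth i zl 0 - z i)%Z.
have gap : r * IZR m = (r * IZR (List.nth i zl 0%Z) - IZR (w i)) - y i.
  by rewrite /m y_eq minus_IZR; ring.
have r_m : Rabs r * Rabs (IZR m) < r.
  rewrite -Rabs_mult gap; apply: Rle_lt_trans (Rabs_triang _ _) _; rewrite Rabs_Ropp.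
  by have := Q_bd _ Qx i; have := y_bd i; lra.
rewrite Rabs_pos_eq in r_m; last lra.
have /IZR_eq0_of_abs_lt1 m0 : Rabs (IZR m) < 1 by nra.
by move: gap; rewrite m0 Rmult_0_r; lra.
Qed.

Lemma halfspaces_compl_open d (Q : pt d -> Prop) (Hl : list (('I_d -> Z) * R)) (x : pt d) :
  (forall y, Q y <-> Forall (fun h => zdot h.1 y <= h.2) Hl) -> ~ Q x ->
  exists e, 0 < e /\ forall y, close e x y -> ~ Q y.
Proof.
move=> Q_def Qx.
have [h [h_in hx]] : exists h, In h Hl /\ h.2 < zdot h.1 x.
  apply: NNPP => none; apply/Qx/Q_def/Forall_forall => h h_in.
  by apply: Rnot_lt_le => hx; apply: none; exists h.
have [e [e_gt0 near]] := zdot_continuous h.1 x (r := zdot h.1 x - h.2) ltac:(lra).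
exists e; split => // y xy /Q_def /Forall_forall /(_ h h_in) hy.
by have [_ gt] := Rabs_def2 _ _ (near y xy); lra.
Qed.

Lemma ehrhart_translates_incl d (P Q : pt d -> Prop) :
  semi_rational_polytope P -> semi_rational_polytope Q -> codim_le1 P ->
  (forall (w : 'I_d -> Z) (s : R), 0 < s ->
     forall n : nat, ehrhart (translate P w) s n <-> ehrhart (translate Q w) s n) ->
  forall x : pt d, P x -> Q x.
Proof.
move=> [[HlP P_def] [MP P_bd]] [[HlQ Q_def] [MQ Q_bd]] [p [Pp p_indep]] same_L x Px.
apply: NNPP => Qx.
have [e [e_gt0 notQ]] := halfspaces_compl_open Q_def Qx.
have [y [Py [xy [r [z [w [r_big y_eq]]]]]]] :=
  scaled_lattice_points_dense (Rmax 0 (MP + MQ)) P_def Pp p_indep Px e_gt0.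
have r_gt0 : 0 < r by have := Rmax_l 0 (MP + MQ); lra.
have Q0 := scaled_lattice_point_isolated Q_bd (P_bd y Py) r_gt0
  (Rle_lt_trans _ _ _ (Rmax_r 0 _) r_big) y_eq (notQ y xy).
have /ehrhart0P P0 := proj2 (same_L w (/ r) (Rinv_0_lt_compat _ r_gt0) 0%N) Q0.
exact: P0 _ (scaled_lattice_point_counted r_gt0 y_eq Py).
Qed.

Theorem theorem4 (d : nat) (P Q : pt d -> Prop) :
  semi_rational_polytope P -> semi_rational_polytope Q ->
  codim_le1 P -> codim_le1 Q ->
  (forall (w : 'I_d -> Z) (s : R), 0 < s ->
     forall n : nat, ehrhart (translate P w) s n <-> ehrhart (translate Q w) s n) ->
  forall x : pt d, P x <-> Q x.
Proof.
move=> sP sQ cP cQ same_L x; split; first exact: ehrhart_translates_incl sP sQ cP same_L x.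
apply: ehrhart_translates_incl sQ sP cQ _ x => w s s_gt0 n.
exact: iff_sym (same_L w s s_gt0 n).
Qed.
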